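(* Let $n\ge1$. Let $\mathcal{H}=\mathcal{K}=\mathbb{C}^2$, with computational basis $\{|0\rangle,|1\rangle\}$ of $\mathcal{H}$ and an orthonormal basis $\{|+\rangle,|-\rangle\}$ of $\mathcal{K}$. For parameters $\theta_m\in[0,1]$, $\phi_m\in\mathbb{R}$, $\eta_m\in(0,1)$ ($m=0,\dots,n$), observations $q_0,\dots,q_n\in\mathcal{P}_1(\mathcal{K})$ and a state $\varphi_{H,0}$ on $M_2(\mathbb{C})$, define for $(p_0,\dots,p_n)\in\mathcal{P}_1(\mathcal{H})^{n+1}$ \[ F_n(p_0,\dots,p_n)=\varphi_{H,0}\Big(\mathcal{E}_{H;0}\big(\mathcal{E}_{H,O;0}(p_0\otimes q_0)\otimes\mathcal{E}_{H;1}(\mathcal{E}_{H,O;1}(p_1\otimes q_1)\otimes\cdots\otimes\mathcal{E}_{H;n}(\mathcal{E}_{H,O;n}(p_n\otimes q_n)\otimes\mathbb{I})\cdots)\big)\Big), \] with the maps $\mathcal{E}_{H;m},\mathcal{E}_{H,O;m}$ as in the context. Then there exist such parameters, observations and initial state with \[ \sup_{p_0,\dots,p_n\in\mathcal{P}_1(\mathcal{H})}F_n(p_0,\dots,p_n)>\sup_{p_0,\dots,p_n\in D_H}F_n(p_0,\dots,p_n),\qquad D_H=\{|0\rangle\langle0|,|1\rangle\langle1|\}, \] and moreover in any tuple $(p_0^*,\dots,p_n^* )$ attaining the supremum on the left, $p_0^*$ has a nonzero off-diagonal entry in the computational basis.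
   Context: $\mathcal{P}_1(\mathcal{H})$ is the set of rank-one orthogonal projections on $\mathcal{H}$. For each $m$: $\sigma_x=|0\rangle\langle1|+|1\rangle\langle0|$, $U_m=e^{-i\phi_m\sigma_x}$, $\Pi_Z(X)=|0\rangle\langle0|X|0\rangle\langle0|+|1\rangle\langle1|X|1\rangle\langle1|$, $\Phi_m(X)=(1-\theta_m)U_m^\dagger XU_m+\theta_m\Pi_Z(X)$, and $\mathcal{E}_{H;m}:M_2\otimes M_2\to M_2$, $\mathcal{E}_{H;m}(X_1\otimes X_2)=\Phi_m(X_1)\,\mathrm{tr}(X_2)$ with $\mathrm{tr}=\tfrac12\operatorname{Tr}$ the normalized trace. Let $L_m^+=\sqrt{1+\eta_m}\,|0\rangle\langle0|+\sqrt{1-\eta_m}\,|1\rangle\langle1|$, $L_m^-=\sqrt{1-\eta_m}\,|0\rangle\langle0|+\sqrt{1+\eta_m}\,|1\rangle\langle1|$, $W_m^\pm:\mathcal{H}\to\mathcal{H}\otimes\mathcal{K}$, $W_m^\pm\xi=L_m^\pm\xi\otimes|\pm\rangle$, and $\mathcal{E}_{H,O;m}(X)=(W_m^+)^\dagger XW_m^++(W_m^-)^\dagger XW_m^-$ for $X\in\mathcal{B}(\mathcal{H})\otimes\mathcal{B}(\mathcal{K})$; in particular $\mathcal{E}_{H,O;m}(A\otimes|\pm\rangle\langle\pm|)=L_m^\pm AL_m^\pm$. *)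

From HB Require Import structures.
From mathcomp Require Import all_boot all_order all_algebra.
From mathcomp Require Import reals trigo.
From mathcomp Require Import complex mxtens.

Set Implicit Arguments.
Unset Strict Implicit.
Unset Printing Implicit Defensive.

Import Order.TTheory GRing.Theory Num.Theory.
Local Open Scope ring_scope.
Local Open Scope complex_scope.

Section QDefs.
Variable R : realType.
Local Notation C := R[i].

Definition adj {m n : nat} (A : 'M[C]_(m, n)) : 'M[C]_(n, m) :=
  (map_mx conjc A)^T.

Definition rank_one_proj (p : 'M[C]_2) : Prop :=
  [/\ p *m p = p, adj p = p & \rank p = 1%N].

Definition ntr (X : 'M[C]_2) : C := (\tr X) / 2%:R.

Definition is_state (st : 'M[C]_2 -> C) : Prop :=
  [/\ linear st, (forall X : 'M[C]_2, 0 <= st (adj X *m X)) & st 1%:M = 1].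

Definition ket (k : 'I_2) : 'cV[C]_2 := delta_mx k 0.
Definition proj_ket (k : 'I_2) : 'M[C]_2 := ket k *m adj (ket k).

Definition sigma_x : 'M[C]_2 :=
  ket 0 *m adj (ket 1) + ket 1 *m adj (ket 0).

(* U = exp(-i phi sigma_x) = cos(phi) I - i sin(phi) sigma_x  (sigma_x^2 = I). *)
Definition Umx (ph : R) : 'M[C]_2 :=
  (cos ph)%:C%:M - ('i * (sin ph)%:C) *: sigma_x.

Definition PiZ (X : 'M[C]_2) : 'M[C]_2 :=
  proj_ket 0 *m X *m proj_ket 0 + proj_ket 1 *m X *m proj_ket 1.

Definition Phi (th ph : R) (X : 'M[C]_2) : 'M[C]_2 :=
  (1 - th)%:C *: (adj (Umx ph) *m X *m Umx ph) + th%:C *: PiZ X.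

(* E_{H;m}(X1 (x) X2) = Phi_m(X1) tr(X2), given on elementary tensors. *)
Definition EH (th ph : R) (X1 X2 : 'M[C]_2) : 'M[C]_2 :=
  ntr X2 *: Phi th ph X1.

Definition Lp (et : R) : 'M[C]_2 :=
  (Num.sqrt (1 + et))%:C *: proj_ket 0 + (Num.sqrt (1 - et))%:C *: proj_ket 1.
Definition Lm (et : R) : 'M[C]_2 :=
  (Num.sqrt (1 - et))%:C *: proj_ket 0 + (Num.sqrt (1 + et))%:C *: proj_ket 1.

(* The orthonormal basis {|+>, |->} of K = C^2, taken as its coordinate basis:
   |+> = first basis vector, |-> = second basis vector of K. *)
Definition ketp : 'cV[C]_2 := delta_mx 0 0.
Definition ketm : 'cV[C]_2 := delta_mx 1 0.

Definition Wp (et : R) : 'M[C]_(2 * 2, 2 * 1) := Lp et *t ketp.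
Definition Wm (et : R) : 'M[C]_(2 * 2, 2 * 1) := Lm et *t ketm.

Definition EHO (et : R) (X : 'M[C]_(2 * 2)) : 'M[C]_2 :=
  castmx (muln1 2, muln1 2)
    (adj (Wp et) *m X *m Wp et + adj (Wm et) *m X *m Wm et).

Definition Fn (n : nat) (th ph et : 'I_n.+1 -> R) (q : 'I_n.+1 -> 'M[C]_2)
  (st : 'M[C]_2 -> C) (p : 'I_n.+1 -> 'M[C]_2) : C :=
  st (foldr (fun (m : nat) (acc : 'M[C]_2) =>
           EH (th (inord m)) (ph (inord m))
              (EHO (et (inord m)) (p (inord m) *t q (inord m))) acc)
        1%:M (iota 0 n.+1)).

Definition in_DH (p : 'M[C]_2) : Prop := exists k : 'I_2, p = proj_ket k.

End QDefs.

(* Switch off the unitary rotation and the dephasing (theta = phi = 0),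
   take eta = 1/2, all observations |+><+|, and as initial state the vector state
   of v = (|0> + |1>)/sqrt 2.  With L = L^+ = diag(sqrt(1+eta), sqrt(1-eta)) the
   nested channels decouple into
     F_n(p) = (prod_{m >= 1} tr(L p_m L)) * <v| L p_0 L |v>.
   Each weight tr(L p_m L) is positive on rank-one projections (their diagonal is
   (a, 1 - a) with 0 <= a <= 1), and is largest at |0><0|.  The last factor is
   (1 +- eta)/2 at p_0 = |0><0|, |1><1| but (1 + sqrt(1 - eta^2))/2 at p_0 = |v><v|,
   which is larger as soon as 2 eta^2 < 1.  Finally a rank-one projection with a
   vanishing off-diagonal entry is |0><0| or |1><1|, so replacing p_0 by |v><v|
   strictly improves any tuple whose p_0 is diagonal. *)

From HB Require Import structures.
From mathcomp Require Import all_boot all_order all_algebra.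
From mathcomp Require Import reals trigo.
From mathcomp Require Import complex mxtens.
From mathcomp Require Import ring lra.
Set Implicit Arguments.
Unset Strict Implicit.
Unset Printing Implicit Defensive.

Import Order.TTheory GRing.Theory Num.Theory.
Local Open Scope ring_scope.
Local Open Scope complex_scope.

Lemma mxtrace_idem (F : fieldType) n (P : 'M[F]_n) :
  P *m P = P -> \tr P = (\rank P)%:R.
Proof.
move=> PP; set L := col_base P; set U := row_base P.
have UL1 : U *m L = 1%:M.
  apply: (row_full_inj (col_base_full P)); apply: (row_free_inj (row_base_free P)).
  by rewrite /= mulmx1 mulmxA mulmx_base -mulmxA mulmx_base.
by rewrite -{1}(mulmx_base P) mxtrace_mulC UL1 mxtrace1.
Qed.

Section Adjoint.
Variable R : realType.
Local Notation C := R[i].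

Lemma adjK m n (A : 'M[C]_(m, n)) : adj (adj A) = A.
Proof. by apply/matrixP=> i j; rewrite !mxE conjcK. Qed.

Lemma adjM m n p (A : 'M[C]_(m, n)) (B : 'M[C]_(n, p)) :
  adj (A *m B) = adj B *m adj A.
Proof. by rewrite /adj map_mxM trmx_mul. Qed.

Lemma adj_tens m n p q (A : 'M[C]_(m, n)) (B : 'M[C]_(p, q)) :
  adj (A *t B) = adj A *t adj B.
Proof. by rewrite /adj map_mxT trmx_tens. Qed.

Lemma adj1mx n : adj (1%:M : 'M[C]_n) = 1%:M.
Proof. by apply/matrixP=> i j; rewrite !mxE conjc_nat eq_sym. Qed.

Lemma adj_mul_diag_ge0 m n (A : 'M[C]_(m, n)) i : 0 <= (adj A *m A) i i.
Proof.
rewrite mxE; apply: sumr_ge0 => k _; rewrite !mxE mulrC; exact: mulcJ_ge0.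
Qed.

End Adjoint.

Section RankOneProjections.
Variable R : realType.
Local Notation C := R[i].

Lemma ord2P (i : 'I_2) : i = 0 \/ i = 1.
Proof. by case: i => [[|[|//]] ?]; [left | right]; apply: val_inj. Qed.

Lemma sum_ord2 (F : 'I_2 -> C) : \sum_(k < 2) F k = F 0 + F 1.
Proof. by rewrite big_ord_recl big_ord1; congr (_ + F _); apply: val_inj. Qed.

Lemma rank_one_proj_outer (v : 'cV[C]_2) :
  adj v *m v = 1%:M -> rank_one_proj (v *m adj v).
Proof.
move=> vv1; split.
- by rewrite mulmxA -(mulmxA v) vv1 mulmx1.
- by rewrite adjM adjK.
apply/eqP; rewrite eqn_leq (leq_trans (mxrankM_maxl _ _) (rank_leq_col _)).
rewrite lt0n mxrank_eq0; apply: contraTneq isT => vv0.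
have : adj v *m (v *m adj v) *m v = 1%:M by rewrite mulmxA vv1 mul1mx.
rewrite vv0 mulmx0 mul0mx => /matrixP/(_ 0 0).
by rewrite !mxE => /eqP; rewrite eq_sym oner_eq0.
Qed.

Lemma proj_ket_rank_one (k : 'I_2) : rank_one_proj (proj_ket R k).
Proof.
apply: rank_one_proj_outer; apply/matrixP=> i j.
rewrite !ord1 !mxE sum_ord2 !mxE !conjc_nat -!natrM !mulnb.
by case: (ord2P k) => ->; rewrite -natrD.
Qed.

Lemma rank_one_proj_diag (P : 'M[C]_2) : rank_one_proj P ->
  exists a : R, [/\ 0 <= a <= 1, P 0 0 = a%:C & P 1 1 = (1 - a)%:C].
Proof.
case=> PP adjP rkP.
have diag_ge0 i : 0 <= P i i.
  have <- : adj P *m P = P by rewrite adjP.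
  exact: adj_mul_diag_ge0.
have trP : P 0 0 + P 1 1 = 1.
  by have := mxtrace_idem PP; rewrite rkP /mxtrace sum_ord2.
set a := complex.Re (P 0 0).
have P00E : a%:C = P 0 0 by apply/RRe_real/ger0_real.
have P11E : P 1 1 = (1 - a)%:C.
  apply: (addrI (P 0 0)); rewrite trP -{1}P00E -rmorphD addrC subrK.
  by rewrite rmorph1.
exists a; split=> //; apply/andP; split.
  by rewrite -ler0c P00E.
by rewrite -subr_ge0 -ler0c -P11E.
Qed.

Lemma proj_ketE (k : 'I_2) : proj_ket R k = delta_mx k k.
Proof.
apply/matrixP=> i j; rewrite !mxE big_ord1 !mxE conjc_nat -natrM mulnb.
by rewrite !eqxx !andbT.
Qed.

Lemma rank_one_proj_offdiag0 (P : 'M[C]_2) :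
  rank_one_proj P -> P 0 1 = 0 -> in_DH P.
Proof.
move=> rP P01; have [a [_ P00 P11]] := rank_one_proj_diag rP.
case: rP => PP adjP _.
have P10 : P 1 0 = 0 by rewrite -adjP !mxE P01 conjc0.
have idem_a : a * a = a.
  have : P 0 0 * P 0 0 = P 0 0 by rewrite -{3}PP mxE sum_ord2 P01 mul0r addr0.
  by rewrite P00 -rmorphM => /complexI.
have [a0 | a1] : a = 0 \/ a = 1.
  move/eqP: idem_a; rewrite -subr_eq0 -{3}[a]mulr1 -mulrBr mulf_eq0 subr_eq0.
  by case/orP=> /eqP; [left | right].
- rewrite a0 subr0 in P00 P11; exists 1; rewrite proj_ketE; apply/matrixP=> i j.
  by case: (ord2P i) => ->; case: (ord2P j) => ->; rewrite mxE /= ?P00 ?P01 ?P10 ?P11.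
- rewrite a1 subrr in P00 P11; exists 0; rewrite proj_ketE; apply/matrixP=> i j.
  by case: (ord2P i) => ->; case: (ord2P j) => ->; rewrite mxE /= ?P00 ?P01 ?P10 ?P11.
Qed.

End RankOneProjections.

Section Model.
Variable R : realType.
Local Notation C := R[i].

Lemma Phi00 (X : 'M[C]_2) : Phi 0 0 X = X.
Proof.
have U0 : Umx (0 : R) = 1%:M by rewrite /Umx cos0 sin0 mulr0 scale0r subr0.
by rewrite /Phi U0 adj1mx mulmx1 mul1mx subr0 scale1r scale0r addr0.
Qed.

Lemma ket_orthonormal (j k : 'I_2) : adj (ket R j) *m ket R k = (j == k)%:R%:M.
Proof.
apply/matrixP=> a b; rewrite !ord1 !mxE sum_ord2 !mxE !conjc_nat -!natrM !mulnb.
by case: (ord2P j) => ->; case: (ord2P k) => ->; rewrite ?addr0 ?add0r.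
Qed.

Definition lcoef (e : R) (i : 'I_2) : R :=
  Num.sqrt (if i == 0 then 1 + e else 1 - e).

Lemma LpE (e : R) : Lp e = diag_mx (\row_i (lcoef e i)%:C).
Proof.
rewrite /Lp !proj_ketE; apply/matrixP=> i j; rewrite !mxE /lcoef.
by case: (ord2P i) => ->; case: (ord2P j) => ->; rewrite /= ?mulr1 ?mulr0 ?add0r ?addr0.
Qed.

Lemma adj_Lp (e : R) : adj (Lp e) = Lp e.
Proof.
rewrite LpE; apply/matrixP=> i j; rewrite !mxE eq_sym.
by case: eqP => [->|]; rewrite ?mulr1n ?mulr0n ?conjc_real ?conjc0.
Qed.

Lemma LpL_entry (e : R) (P : 'M[C]_2) i j :
  (Lp e *m P *m Lp e) i j = (lcoef e i * lcoef e j)%:C * P i j.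
Proof. by rewrite LpE mul_diag_mx mul_mx_diag !mxE mulrAC rmorphM. Qed.

Lemma EHO_proj0 (e : R) (P : 'M[C]_2) :
  EHO e (P *t proj_ket R 0) = Lp e *m P *m Lp e.
Proof.
have ket_proj0 k : adj (ket R k) *m proj_ket R 0 *m ket R k = (k == 0)%:R%:M.
  rewrite /proj_ket mulmxA -mulmxA (ket_orthonormal k 0) (ket_orthonormal 0 k).
  by rewrite -scalar_mxM -natrM mulnb eq_sym andbb.
rewrite /EHO /Wp /Wm !adj_tens !tensmx_mul (ket_proj0 0) (ket_proj0 1).
rewrite -[(1 == 0 :> 'I_2)]/false raddf0.
rewrite [X in _ + X]tensmx0 addr0 tens_mx_scalar scale1r castmx_comp castmx_id.
by rewrite adj_Lp.
Qed.

Definition vstate (v : 'cV[C]_2) (X : 'M[C]_2) : C := (adj v *m X *m v) 0 0.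

Lemma vstateZ v c X : vstate v (c *: X) = c * vstate v X.
Proof. by rewrite /vstate -scalemxAr -scalemxAl mxE. Qed.

Lemma vstate_is_state v : adj v *m v = 1%:M -> is_state (vstate v).
Proof.
move=> vv1; split.
- by move=> c X Y; rewrite /vstate mulmxDr mulmxDl mxE -scalemxAr -scalemxAl mxE.
- by move=> X; rewrite /vstate !mulmxA -adjM -mulmxA; exact: adj_mul_diag_ge0.
- by rewrite /vstate mulmx1 vv1 mxE.
Qed.

Lemma ntr_foldr_scale (M : nat -> 'M[C]_2) s :
  ntr (foldr (fun m A => ntr A *: M m) 1%:M s) = \prod_(m <- s) ntr (M m).
Proof.
have ntrZ c (A : 'M[C]_2) : ntr (c *: A) = c * ntr A by rewrite /ntr mxtraceZ mulrA.
elim: s => [|m s IH]; last by rewrite big_cons /= ntrZ IH mulrC.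
by rewrite big_nil /ntr mxtrace1 divff // pnatr_eq0.
Qed.

Definition tail_weight n (e : R) (p : 'I_n.+1 -> 'M[C]_2) : C :=
  \prod_(i < n) ntr (Lp e *m p (lift ord0 i) *m Lp e).

Lemma Fn_factor n (e : R) v (p : 'I_n.+1 -> 'M[C]_2) :
  Fn (fun _ => 0) (fun _ => 0) (fun _ => e) (fun _ => proj_ket R 0) (vstate v) p =
  tail_weight e p * vstate v (Lp e *m p ord0 *m Lp e).
Proof.
have inord_lift (i : 'I_n) : inord i.+1 = lift ord0 i.
  by apply: val_inj; rewrite /= inordK // ltnS.
rewrite /Fn (_ : foldr _ _ _ =
    foldr (fun m A => ntr A *: (Lp e *m p (inord m) *m Lp e)) 1%:M (iota 0 n.+1)).
  rewrite [iota 0 n.+1]/= [foldr _ _ (_ :: _)]/= vstateZ ntr_foldr_scale.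
  have -> : iota 1 n = index_iota 1 n.+1 by rewrite /index_iota subn1.
  have -> : inord 0 = ord0 :> 'I_n.+1 by apply: val_inj; rewrite /= inordK.
  rewrite big_add1 big_mkord.
  by under eq_bigr => i _ do rewrite inord_lift.
by elim: (iota 0 n.+1) => //= m s ->; rewrite /EH Phi00 EHO_proj0.
Qed.

Definition with_head n (P : 'M[C]_2) (p : 'I_n.+1 -> 'M[C]_2) (m : 'I_n.+1) :=
  if m == ord0 then P else p m.

Lemma with_head_rank_one n P (p : 'I_n.+1 -> 'M[C]_2) :
  rank_one_proj P -> (forall m, rank_one_proj (p m)) ->
  forall m, rank_one_proj (with_head P p m).
Proof. by move=> rP rp m; rewrite /with_head; case: eqP. Qed.

Lemma tail_weight_with_head n (e : R) P (p : 'I_n.+1 -> 'M[C]_2) :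
  tail_weight e (with_head P p) = tail_weight e p.
Proof.
by apply: eq_bigr => i _; rewrite /with_head eq_sym (negbTE (neq_lift _ _)).
Qed.

Lemma Fn_with_head n (e : R) v P (p : 'I_n.+1 -> 'M[C]_2) :
  Fn (fun _ => 0) (fun _ => 0) (fun _ => e) (fun _ => proj_ket R 0) (vstate v)
     (with_head P p) = tail_weight e p * vstate v (Lp e *m P *m Lp e).
Proof. by rewrite Fn_factor tail_weight_with_head /with_head eqxx. Qed.

End Model.

Section PlusState.
Variable R : realType.
Local Notation C := R[i].

Lemma realc_half (x : R) : x%:C / 2 = (x / 2)%:C.
Proof. by rewrite -[2 : C](rmorph_nat (real_complex R)) -fmorph_div. Qed.

Definition ket_plus : 'cV[C]_2 := const_mx (Num.sqrt 2^-1)%:C.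

Definition proj_plus : 'M[C]_2 := ket_plus *m adj ket_plus.

Lemma proj_plus_entry i j : proj_plus i j = (2^-1)%:C.
Proof.
rewrite !mxE big_ord1 !mxE conjc_real -rmorphM -expr2 sqr_sqrtr //.
by rewrite invr_ge0 ler0n.
Qed.

Lemma ket_plus_unit : adj ket_plus *m ket_plus = 1%:M.
Proof.
apply/matrixP=> i j; rewrite !ord1 !mxE sum_ord2 !mxE conjc_real -rmorphM -expr2.
rewrite sqr_sqrtr ?invr_ge0 ?ler0n // -rmorphD -[1 : C](rmorph1 (real_complex R)).
by congr (_%:C); field.
Qed.

Lemma vstate_ket_plus (X : 'M[C]_2) :
  vstate ket_plus X = (X 0 0 + X 0 1 + X 1 0 + X 1 1) / 2.
Proof.
rewrite /vstate !mxE sum_ord2 !mxE !sum_ord2 !mxE conjc_real.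
set t := (Num.sqrt 2^-1)%:C.
have tt : t * t = 2^-1.
  rewrite -rmorphM -expr2 sqr_sqrtr ?invr_ge0 ?ler0n //.
  by rewrite fmorphV rmorph_nat.
transitivity ((X 0 0 + X 0 1 + X 1 0 + X 1 1) * (t * t)); first by ring.
by rewrite tt.
Qed.

Lemma proj_plus_rank_one : rank_one_proj proj_plus.
Proof. exact/rank_one_proj_outer/ket_plus_unit. Qed.

Lemma ntr_LpL (e : R) (P : 'M[C]_2) : ntr (Lp e *m P *m Lp e) =
  ((lcoef e 0 ^+ 2)%:C * P 0 0 + (lcoef e 1 ^+ 2)%:C * P 1 1) / 2.
Proof. by rewrite /ntr /mxtrace sum_ord2 !LpL_entry -!expr2. Qed.

Lemma vstate_LpL_proj_ket (e : R) (k : 'I_2) :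
  vstate ket_plus (Lp e *m proj_ket R k *m Lp e) = (lcoef e k ^+ 2 / 2)%:C.
Proof.
rewrite vstate_ket_plus !LpL_entry proj_ketE !mxE -realc_half expr2.
by case: (ord2P k) => -> /=; rewrite ?mulr1 ?mulr0 ?addr0 ?add0r.
Qed.

Lemma vstate_LpL_proj_plus (e : R) :
  vstate ket_plus (Lp e *m proj_plus *m Lp e) =
  ((lcoef e 0 + lcoef e 1) ^+ 2 / 4)%:C.
Proof.
rewrite vstate_ket_plus !LpL_entry !proj_plus_entry.
rewrite -!rmorphM -!rmorphD realc_half.
by congr (_%:C); field.
Qed.

End PlusState.

Section Estimates.
Variable R : realType.
Local Notation C := R[i].
Variable e : R.
Hypothesis e_ge0 : 0 <= e.
Hypothesis e_small : e ^+ 2 * 2 < 1.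

Let e_lt1 : e < 1. Proof. by move: e_ge0 e_small; nra. Qed.

Let lcoef0_sqr : lcoef e 0 ^+ 2 = 1 + e.
Proof. by rewrite /lcoef /= sqr_sqrtr //; move: e_ge0 e_lt1; lra. Qed.

Let lcoef1_sqr : lcoef e 1 ^+ 2 = 1 - e.
Proof. by rewrite /lcoef /= sqr_sqrtr //; move: e_ge0 e_lt1; lra. Qed.

Let lcoef_mul_gt : e < lcoef e 0 * lcoef e 1.
Proof.
have l01_ge0 : 0 <= lcoef e 0 * lcoef e 1 by rewrite mulr_ge0 ?sqrtr_ge0.
have : (lcoef e 0 * lcoef e 1) ^+ 2 = 1 - e ^+ 2.
  by rewrite exprMn lcoef0_sqr lcoef1_sqr; ring.
by move: e_ge0 e_small l01_ge0; nra.
Qed.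

Lemma ntr_LpL_bounds (P : 'M[C]_2) : rank_one_proj P ->
  0 < ntr (Lp e *m P *m Lp e) <= ntr (Lp e *m proj_ket R 0 *m Lp e).
Proof.
case/rank_one_proj_diag=> a [/andP[a_ge0 a_le1] P00 P11].
rewrite !ntr_LpL P00 P11 proj_ketE !mxE /= mulr1 mulr0 addr0.
rewrite -!rmorphM -rmorphD !realc_half ltcR lecR lcoef0_sqr lcoef1_sqr.
by apply/andP; split; move: e_ge0 e_lt1; nra.
Qed.

Lemma vstate_LpL_proj_ket_lt (k : 'I_2) :
  0 <= vstate (ket_plus R) (Lp e *m proj_ket R k *m Lp e) <
  vstate (ket_plus R) (Lp e *m proj_plus R *m Lp e).
Proof.
rewrite [X in _ < X]vstate_LpL_proj_plus vstate_LpL_proj_ket.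
rewrite ler0c ltcR sqrrD lcoef0_sqr lcoef1_sqr.
have lk_sqr : lcoef e k ^+ 2 <= 1 + e.
  by case: (ord2P k) => ->; rewrite ?lcoef0_sqr ?lcoef1_sqr; move: e_ge0; lra.
apply/andP; split; first by rewrite divr_ge0 ?sqr_ge0.
by move: lcoef_mul_gt; lra.
Qed.

Lemma tail_weight_gt0 n (p : 'I_n.+1 -> 'M[C]_2) :
  (forall m, rank_one_proj (p m)) -> 0 < tail_weight e p.
Proof.
move=> rp; apply: prodr_gt0 => i _.
by case/andP: (ntr_LpL_bounds (rp (lift ord0 i))).
Qed.

Lemma tail_weight_le n (p : 'I_n.+1 -> 'M[C]_2) :
  (forall m, rank_one_proj (p m)) ->
  tail_weight e p <= tail_weight e (fun _ : 'I_n.+1 => proj_ket R 0).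
Proof.
move=> rp; apply: ler_prod => i _.
by case/andP: (ntr_LpL_bounds (rp (lift ord0 i))) => /ltW -> ->.
Qed.

Local Notation F n :=
  (@Fn R n (fun _ => 0) (fun _ => 0) (fun _ => e) (fun _ => proj_ket R 0)
     (vstate (ket_plus R))).

Lemma Fn_coherent_gt_diag n (d : 'I_n.+1 -> 'M[C]_2) :
  (forall m, in_DH (d m)) ->
  F n d < F n (with_head (proj_plus R) (fun _ => proj_ket R 0)).
Proof.
move=> dD; have [k d0] := dD ord0.
have rd m : rank_one_proj (d m) by have [k' ->] := dD m; exact: proj_ket_rank_one.
have /andP[f_ge0 f_lt] := vstate_LpL_proj_ket_lt k.
rewrite Fn_factor Fn_with_head d0.
apply: le_lt_trans (ler_wpM2r f_ge0 (tail_weight_le rd)) _.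
by rewrite ltr_pM2l // tail_weight_gt0 // => m; exact: proj_ket_rank_one.
Qed.

Lemma Fn_maximizer_head_offdiag n (p : 'I_n.+1 -> 'M[C]_2) :
  (forall m, rank_one_proj (p m)) ->
  (forall p' : 'I_n.+1 -> 'M[C]_2,
     (forall m, rank_one_proj (p' m)) -> F n p' <= F n p) ->
  p ord0 0 1 != 0.
Proof.
move=> rp pmax; apply/eqP=> p01.
have [k p0] := rank_one_proj_offdiag0 (rp ord0) p01.
have := pmax _ (with_head_rank_one (proj_plus_rank_one R) rp).
rewrite Fn_with_head Fn_factor p0 ler_pM2l ?tail_weight_gt0 //.
by have /andP[_ /lt_geF ->] := vstate_LpL_proj_ket_lt k.
Qed.

End Estimates.

Theorem mainTheorem3 (R : realType) (n : nat) (hn : (1 <= n)%N) :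
  exists (th ph et : 'I_n.+1 -> R) (q : 'I_n.+1 -> 'M[R[i]]_2)
         (st : 'M[R[i]]_2 -> R[i]),
    [/\ (forall m, 0 <= th m <= 1) /\ (forall m, 0 < et m < 1),
        (forall m, rank_one_proj (q m)),
        is_state st,
        (* sup over P_1(H)^{n+1} strictly exceeds the (finite) sup over D_H^{n+1} *)
        (exists p : 'I_n.+1 -> 'M[R[i]]_2,
            (forall m, rank_one_proj (p m)) /\
            (forall d : 'I_n.+1 -> 'M[R[i]]_2, (forall m, in_DH (d m)) ->
               Fn th ph et q st d < Fn th ph et q st p))
      & (* every maximizer has p_0 with a nonzero off-diagonal entry *)
        (forall p : 'I_n.+1 -> 'M[R[i]]_2,
            (forall m, rank_one_proj (p m)) ->
            (forall p' : 'I_n.+1 -> 'M[R[i]]_2, (forall m, rank_one_proj (p' m)) ->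
               Fn th ph et q st p' <= Fn th ph et q st p) ->
            exists i j : 'I_2, i != j /\ p ord0 i j != 0)].
Proof.
pose e : R := 2^-1.
have e_ge0 : 0 <= e by rewrite /e; lra.
have e_small : e ^+ 2 * 2 < 1 by rewrite /e; lra.
exists (fun _ => 0), (fun _ => 0), (fun _ => e), (fun _ => proj_ket R 0).
exists (vstate (ket_plus R)).
split.
- by split=> m; rewrite /e ?lexx ?ler01 //; lra.
- by move=> m; exact: proj_ket_rank_one.
- exact/vstate_is_state/ket_plus_unit.
- exists (with_head (proj_plus R) (fun _ => proj_ket R 0)); split.
    exact: with_head_rank_one (proj_plus_rank_one R) (fun _ => proj_ket_rank_one R 0).
  exact: Fn_coherent_gt_diag.
- move=> p rp pmax; exists 0, 1; split=> //.
  exact: Fn_maximizer_head_offdiag rp pmax.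
Qed.
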